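(* Let $n\ge3$, $0<\epsilon<1$, and define $\alpha,\beta,\gamma,\delta$ and the polynomial $Q(\rho)$ as in the context. If $\epsilon>0$ is sufficiently small, then $Q(\rho)>0$ for all $\rho\in(\epsilon,1)$.
   Context: $D(\epsilon) = -n\epsilon^{n+2} + (n+2)\epsilon^{n+1} + n - (n+2)\epsilon$, $N(\epsilon) = -n\epsilon^{n+1} + (n+1)\epsilon^n - 1$, $K(\epsilon) = -1 + \frac{n+1}{n-1}\epsilon - \epsilon^{n-1} + \frac{n-3}{n-1}\epsilon^n$, $M(\epsilon) = \frac{\epsilon^{n+1}-1}{n(n+1)} + \frac{\epsilon-\epsilon^n}{n(n-1)}$; $\delta = \Big(\epsilon^{n-2}(1-\epsilon) - \frac{(n+2)N K}{D} + \frac{n(n-3)}{n-1}\epsilon^{n-1} - (n-1)\epsilon^{n-2} + \frac{n+1}{n-1}\Big)\Big(\frac{(n+2)N}{D}M + \frac{-(n-1)\epsilon^n + n\epsilon^{n-1}-1}{n(n-1)}\Big)^{-1}$, $\gamma = n(n+1)(n+2)(M\delta + K)/D$, $\alpha = -1 - \frac{\delta}{n(n+1)} - \frac{\gamma}{(n+1)(n+2)}$, $\beta = \frac{n+1}{n-1} + \frac{\delta}{n(n-1)} + \frac{\gamma}{n(n+1)}$ (denominators are nonzero for small $\epsilon$); $Q(\rho) = -\frac{\gamma}{(n+1)(n+2)}\rho^{n+2} - \frac{\delta-\gamma}{n(n+1)}\rho^{n+1} - \Big(1 - \frac{2n+\delta}{n(n-1)}\Big)\rho^n + \rho^{n-1}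 - \alpha - \beta\rho$. *)

From Stdlib Require Import Reals Lra.
Open Scope R_scope.

Section Defs.
Variables (n : nat) (e : R).
Let nr : R := INR n.

Definition Dp : R := - nr * e ^ (n + 2) + (nr + 2) * e ^ (n + 1) + nr - (nr + 2) * e.
Definition Np : R := - nr * e ^ (n + 1) + (nr + 1) * e ^ n - 1.
Definition Kp : R := -1 + (nr + 1) / (nr - 1) * e - e ^ (n - 1) + (nr - 3) / (nr - 1) * e ^ n.
Definition Mp : R := (e ^ (n + 1) - 1) / (nr * (nr + 1)) + (e - e ^ n) / (nr * (nr - 1)).

Definition delta : R :=
  (e ^ (n - 2) * (1 - e) - (nr + 2) * Np * Kp / Dp
     + nr * (nr - 3) / (nr - 1) * e ^ (n - 1) - (nr - 1) * e ^ (n - 2) + (nr + 1) / (nr - 1))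
  * / ((nr + 2) * Np / Dp * Mp + (- (nr - 1) * e ^ n + nr * e ^ (n - 1) - 1) / (nr * (nr - 1))).

Definition gamma : R := nr * (nr + 1) * (nr + 2) * (Mp * delta + Kp) / Dp.

Definition alpha : R := -1 - delta / (nr * (nr + 1)) - gamma / ((nr + 1) * (nr + 2)).

Definition beta : R := (nr + 1) / (nr - 1) + delta / (nr * (nr - 1)) + gamma / (nr * (nr + 1)).

Definition Q (rho : R) : R :=
  - gamma / ((nr + 1) * (nr + 2)) * rho ^ (n + 2)
  - (delta - gamma) / (nr * (nr + 1)) * rho ^ (n + 1)
  - (1 - (2 * nr + delta) / (nr * (nr - 1))) * rho ^ n
  + rho ^ (n - 1) - alpha - beta * rho.
End Defs.

From Stdlib Require Import Reals Lra Lia.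
From Coquelicot Require Import Coquelicot.
Open Scope R_scope.

(* As eps -> 0 the parameters tend to delta = -n(n+1) and gamma = alpha = beta = 0,
   where Q becomes rho^(n-1) (1 - rho)^2; this limit is bounded below away from the
   endpoints, which settles the middle range of rho.  Near the endpoints we use convexity:
   Q'' = rho^(n-3) P(rho) with P a cubic close to
   (n-1)(n-2) - 2n(n-1) rho + n(n+1) rho^2, which is at least 1 when rho <= 1/(4n^2)
   or rho >= 1 - 1/(4n).  The parameters are designed so that Q(eps) = 0 (this is the
   equation solved by gamma), Q'(eps) = eps^(n-2) (1 - eps) >= 0 (solved by delta) and
   Q(1) = Q'(1) = 0 (solved by alpha and beta).  A convex function vanishing at eps with
   nonnegative slope is positive to the right of eps, and one vanishing at 1 with zero
   slope is positive to the left of 1. *)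

Lemma locally_close (f : R -> R) (x eta : R) :
  continuous f x -> 0 < eta -> locally x (fun y => Rabs (f y - f x) < eta).
Proof.
  intros Hf Heta.
  exact (proj1 (filterlim_locally f (f x)) Hf (mkposreal eta Heta)).
Qed.

Lemma locally_neq0 (f : R -> R) (x : R) :
  continuous f x -> f x <> 0 -> locally x (fun y => f y <> 0).
Proof.
  intros Hf Hx.
  apply (filter_imp (fun y => Rabs (f y - f x) < Rabs (f x))).
  - intros y Hy Hy0. rewrite Hy0, Rminus_0_l, Rabs_Ropp in Hy. lra.
  - exact (locally_close f x _ Hf (Rabs_pos_lt _ Hx)).
Qed.

Lemma convex_pos_after_root (f f' f'' : R -> R) (a b : R) :
  a < b ->
  (forall x, a <= x <= b -> derivable_pt_lim f x (f' x)) ->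
  (forall x, a <= x <= b -> derivable_pt_lim f' x (f'' x)) ->
  (forall x, a < x < b -> 0 < f'' x) ->
  f a = 0 -> 0 <= f' a -> 0 < f b.
Proof.
  intros Hab Hf Hf' Hf'' Ha Ha'.
  destruct (MVT_cor2 f f' a b Hab Hf) as [c [Ec Hc]].
  destruct (MVT_cor2 f' f'' a c (proj1 Hc) (fun x Hx => Hf' x ltac:(lra)))
    as [d [Ed Hd]].
  pose proof (Hf'' d ltac:(lra)).
  assert (0 < f' c) by nra.
  nra.
Qed.

Lemma convex_pos_before_root (f f' f'' : R -> R) (a b : R) :
  a < b ->
  (forall x, a <= x <= b -> derivable_pt_lim f x (f' x)) ->
  (forall x, a <= x <= b -> derivable_pt_lim f' x (f'' x)) ->
  (forall x, a < x < b -> 0 < f'' x) ->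
  f b = 0 -> f' b <= 0 -> 0 < f a.
Proof.
  intros Hab Hf Hf' Hf'' Hb Hb'.
  destruct (MVT_cor2 f f' a b Hab Hf) as [c [Ec Hc]].
  destruct (MVT_cor2 f' f'' c b (proj2 Hc) (fun x Hx => Hf' x ltac:(lra)))
    as [d [Ed Hd]].
  pose proof (Hf'' d ltac:(lra)).
  assert (f' c < 0) by nra.
  nra.
Qed.

Lemma gt_mul_unit (c K X : R) : - K < c < K -> 0 <= X <= 1 -> - K < c * X.
Proof. intros. nra. Qed.

Lemma unit_mul (x y : R) : 0 <= x <= 1 -> 0 <= y <= 1 -> 0 <= x * y <= 1.
Proof. intros. split; nra. Qed.

Lemma limit_cubic_ge1 (N t : R) : 3 <= N -> 0 <= t <= 1 ->
  4 * N * N * t <= 1 \/ 4 * N * (1 - t) <= 1 ->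
  1 <= (N - 1) * (N - 2) - 2 * N * (N - 1) * t + N * (N + 1) * t ^ 2.
Proof.
  intros HN Ht [H | H].
  - assert (2 * N * (N - 1) * t <= / 2) by nra.
    nra.
  - replace ((N - 1) * (N - 2) - 2 * N * (N - 1) * t + N * (N + 1) * t ^ 2)
      with (2 + (1 - t) * (2 * N * (N - 1) - N * (N + 1) * (1 + t))) by ring.
    assert (- 4 * N <= 2 * N * (N - 1) - N * (N + 1) * (1 + t)) by nra.
    nra.
Qed.

Section Degree.

Variable n : nat.
Hypothesis Hn : (3 <= n)%nat.
Local Notation N := (INR n).

Lemma N_ge3 : 3 <= N.
Proof. replace 3 with (INR 3) by (simpl; ring). apply le_INR, Hn. Qed.

Definition delta_num (e : R) : R :=
  e ^ (n - 2) * (1 - e) - (N + 2) * Np n e * Kp n e / Dp n e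
  + N * (N - 3) / (N - 1) * e ^ (n - 1) - (N - 1) * e ^ (n - 2) + (N + 1) / (N - 1).

Definition delta_den (e : R) : R :=
  (N + 2) * Np n e / Dp n e * Mp n e
  + (- (N - 1) * e ^ n + N * e ^ (n - 1) - 1) / (N * (N - 1)).

Lemma deltaE (e : R) : delta n e = delta_num e / delta_den e.
Proof. reflexivity. Qed.

Lemma Dp_at0 : Dp n 0 = N.
Proof. unfold Dp. rewrite !pow_i by lia. ring. Qed.

Lemma delta_den_at0 : delta_den 0 = - 2 / (N * N * (N * N - 1)).
Proof.
  pose proof N_ge3. unfold delta_den, Dp, Np, Mp. rewrite !pow_i by lia.
  field. repeat split; nra.
Qed.

Lemma delta_at0 : delta n 0 = - N * (N + 1).
Proof.
  pose proof N_ge3. unfold delta, Dp, Np, Kp, Mp. rewrite !pow_i by lia.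
  field. repeat split; nra.
Qed.

Lemma gamma_at0 : gamma n 0 = 0.
Proof.
  pose proof N_ge3. unfold gamma. rewrite delta_at0. unfold Dp, Mp, Kp.
  rewrite !pow_i by lia. field. repeat split; nra.
Qed.

Lemma alpha_at0 : alpha n 0 = 0.
Proof.
  pose proof N_ge3. unfold alpha. rewrite delta_at0, gamma_at0.
  field. repeat split; nra.
Qed.

Lemma beta_at0 : beta n 0 = 0.
Proof.
  pose proof N_ge3. unfold beta. rewrite delta_at0, gamma_at0.
  field. repeat split; nra.
Qed.

Lemma ex_derive_Dp (e : R) : ex_derive (Dp n) e.
Proof. unfold Dp. auto_derive. exact I. Qed.

Lemma ex_derive_Np (e : R) : ex_derive (Np n) e.
Proof. unfold Np. auto_derive. exact I. Qed.

Lemma ex_derive_Kp (e : R) : ex_derive (Kp n) e.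
Proof. unfold Kp. auto_derive. exact I. Qed.

Lemma ex_derive_Mp (e : R) : ex_derive (Mp n) e.
Proof. unfold Mp. auto_derive. exact I. Qed.

Local Hint Resolve ex_derive_Dp ex_derive_Np ex_derive_Kp ex_derive_Mp : core.

Lemma ex_derive_delta_den (e : R) : Dp n e <> 0 -> ex_derive delta_den e.
Proof. intros. unfold delta_den. auto_derive. repeat split; auto. Qed.

Local Hint Resolve ex_derive_delta_den : core.

Section Regular_point.
Variable e : R.
Hypotheses (HD : Dp n e <> 0) (Hden : delta_den e <> 0).

Lemma ex_derive_delta : ex_derive (delta n) e.
Proof.
  change (delta n) with (fun e => delta_num e / delta_den e). unfold delta_num.
  auto_derive. repeat split; auto.
Qed.

Local Hint Resolve ex_derive_delta : core.

Lemma ex_derive_gamma : ex_derive (gamma n) e.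
Proof. unfold gamma. auto_derive. repeat split; auto. Qed.

Local Hint Resolve ex_derive_gamma : core.

Lemma ex_derive_alpha : ex_derive (alpha n) e.
Proof. unfold alpha. auto_derive. repeat split; auto. Qed.

Lemma ex_derive_beta : ex_derive (beta n) e.
Proof. unfold beta. auto_derive. repeat split; auto. Qed.

End Regular_point.

Definition near_limit (e eta : R) : Prop :=
  Rabs (delta n e + N * (N + 1)) < eta /\ Rabs (gamma n e) < eta /\
  Rabs (alpha n e) < eta /\ Rabs (beta n e) < eta.

Lemma eventually_near_limit (eta : R) : 0 < eta ->
  exists d, 0 < d /\ forall e, 0 < e < d ->
    Dp n e <> 0 /\ delta_den e <> 0 /\ near_limit e eta.
Proof.
  intros Heta. pose proof N_ge3.
  assert (HD : Dp n 0 <> 0) by (rewrite Dp_at0; lra).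
  assert (Hden : delta_den 0 <> 0).
  { rewrite delta_den_at0. apply Rmult_integral_contrapositive_currified.
    - lra.
    - apply Rinv_neq_0_compat.
      assert (0 < N * N * (N * N - 1)) by (apply Rmult_lt_0_compat; nra). lra. }
  assert (Hcont : forall f : R -> R, ex_derive f 0 -> continuous f 0)
    by (intros f Hf; exact (ex_derive_continuous f 0 Hf)).
  pose proof (filter_and _ _ (locally_neq0 _ _ (Hcont _ (ex_derive_Dp 0)) HD)
    (filter_and _ _ (locally_neq0 _ _ (Hcont _ (ex_derive_delta_den 0 HD)) Hden)
    (filter_and _ _ (locally_close _ _ _ (Hcont _ (ex_derive_delta 0 HD Hden)) Heta)
    (filter_and _ _ (locally_close _ _ _ (Hcont _ (ex_derive_gamma 0 HD Hden)) Heta)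
    (filter_and _ _ (locally_close _ _ _ (Hcont _ (ex_derive_alpha 0 HD Hden)) Heta)
                    (locally_close _ _ _ (Hcont _ (ex_derive_beta 0 HD Hden)) Heta)))))) as Hnear.
  destruct Hnear as [d Hd]. exists d. split; [apply cond_pos |].
  intros e He. destruct (Hd e) as (HDe & Hdene & Hdelta & Hgamma & Halpha & Hbeta).
  { change (Rabs (e - 0) < d). rewrite Rminus_0_r, Rabs_pos_eq; lra. }
  rewrite delta_at0 in Hdelta. rewrite gamma_at0, Rminus_0_r in Hgamma.
  rewrite alpha_at0, Rminus_0_r in Halpha. rewrite beta_at0, Rminus_0_r in Hbeta.
  replace (delta n e - - N * (N + 1)) with (delta n e + N * (N + 1)) in Hdelta by ring.
  repeat split; assumption.
Qed.

Definition Q' (e r : R) : R :=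
  - gamma n e / (N + 1) * r ^ (n + 1) - (delta n e - gamma n e) / N * r ^ n
  - N * (1 - (2 * N + delta n e) / (N * (N - 1))) * r ^ (n - 1)
  + (N - 1) * r ^ (n - 2) - beta n e.

Definition Q''_cubic (e t : R) : R :=
  - gamma n e * t ^ 3 - (delta n e - gamma n e) * t ^ 2
  - (N * N - 3 * N - delta n e) * t + (N - 1) * (N - 2).

Definition Q'' (e r : R) : R := r ^ (n - 3) * Q''_cubic e r.

Lemma derivable_pt_lim_Q (e r : R) : derivable_pt_lim (Q n e) r (Q' e r).
Proof.
  pose proof N_ge3. apply is_derive_Reals. unfold Q. auto_derive; [exact I |].
  unfold Q'.
  replace (Init.Nat.pred (n + 2)) with (n + 1)%nat by lia.
  replace (Init.Nat.pred (n + 1)) with n by lia.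
  replace (Init.Nat.pred n) with (n - 1)%nat by lia.
  replace (Init.Nat.pred (n - 1)) with (n - 2)%nat by lia.
  rewrite !plus_INR, minus_INR by lia. simpl. field. lra.
Qed.

Lemma derivable_pt_lim_Q' (e r : R) : derivable_pt_lim (Q' e) r (Q'' e r).
Proof.
  pose proof N_ge3. apply is_derive_Reals. unfold Q'. auto_derive; [exact I |].
  unfold Q'', Q''_cubic.
  replace (Init.Nat.pred (n + 1)) with (n - 3 + 3)%nat by lia.
  replace (Init.Nat.pred n) with (n - 3 + 2)%nat by lia.
  replace (Init.Nat.pred (n - 1)) with (n - 3 + 1)%nat by lia.
  replace (Init.Nat.pred (n - 2)) with (n - 3)%nat by lia.
  rewrite !pow_add, plus_INR, !minus_INR by lia. simpl. field. lra.
Qed.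

Lemma Q_at_eps_expand (e : R) :
  Q n e e = Dp n e * gamma n e / (N * (N + 1) * (N + 2)) - (Mp n e * delta n e + Kp n e).
Proof.
  pose proof N_ge3. unfold Q, alpha, beta, Dp, Mp, Kp. field. repeat split; lra.
Qed.

Lemma Q_at_eps (e : R) : Dp n e <> 0 -> Q n e e = 0.
Proof.
  intros HD. pose proof N_ge3. rewrite Q_at_eps_expand. unfold gamma.
  field. repeat split; lra.
Qed.

Lemma Q'_at_eps_expand (e : R) : Dp n e <> 0 ->
  Q' e e = delta_den e * delta n e - delta_num e + e ^ (n - 2) * (1 - e).
Proof.
  intros HD. pose proof N_ge3. unfold Q', beta, gamma, delta_den, delta_num, Np.
  field. repeat split; lra.
Qed.

Lemma Q'_at_eps (e : R) : Dp n e <> 0 -> delta_den e <> 0 ->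
  Q' e e = e ^ (n - 2) * (1 - e).
Proof.
  intros HD Hden. rewrite Q'_at_eps_expand, deltaE by exact HD. field. exact Hden.
Qed.

Lemma Q_at_one (e : R) : Q n e 1 = 0.
Proof.
  pose proof N_ge3. unfold Q, alpha, beta. rewrite !pow1. field. repeat split; lra.
Qed.

Lemma Q'_at_one (e : R) : Q' e 1 = 0.
Proof.
  pose proof N_ge3. unfold Q', beta. rewrite !pow1. field. repeat split; lra.
Qed.

Lemma Q''_cubic_pos (e eta t : R) : near_limit e eta -> eta <= / 8 -> 0 <= t <= 1 ->
  4 * N * N * t <= 1 \/ 4 * N * (1 - t) <= 1 -> 0 < Q''_cubic e t.
Proof.
  intros (Hu & Hg & _) Heta Ht Hends.
  pose proof (limit_cubic_ge1 N t N_ge3 Ht Hends).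
  apply Rabs_lt_between in Hu, Hg.
  set (u := delta n e + N * (N + 1)) in *.
  assert (Ht2 : 0 <= t ^ 2 <= 1) by (split; nra).
  assert (Ht3 : 0 <= t ^ 3 <= 1) by (simpl; split; nra).
  pose proof (gt_mul_unit u eta t Hu Ht).
  pose proof (gt_mul_unit (- (u - gamma n e)) (2 * eta) (t ^ 2) ltac:(lra) Ht2).
  pose proof (gt_mul_unit (- gamma n e) eta (t ^ 3) ltac:(lra) Ht3).
  replace (Q''_cubic e t) with ((N - 1) * (N - 2) - 2 * N * (N - 1) * t + N * (N + 1) * t ^ 2
    + u * t + - (u - gamma n e) * t ^ 2 + - gamma n e * t ^ 3)
    by (unfold Q''_cubic, u; ring).
  lra.
Qed.

Lemma Q''_pos (e eta t : R) : near_limit e eta -> eta <= / 8 -> 0 < t <= 1 ->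
  4 * N * N * t <= 1 \/ 4 * N * (1 - t) <= 1 -> 0 < Q'' e t.
Proof.
  intros. apply Rmult_lt_0_compat.
  - apply pow_lt. lra.
  - apply (Q''_cubic_pos e eta); auto. lra.
Qed.

Lemma Q_gt_limit (e eta rho : R) : near_limit e eta -> 0 <= rho <= 1 ->
  rho ^ (n - 1) * (1 - rho) ^ 2 - 6 * eta < Q n e rho.
Proof.
  intros (Hu & Hg & Ha & Hb) Hrho. pose proof N_ge3.
  apply Rabs_lt_between in Hu, Hg, Ha, Hb.
  set (u := delta n e + N * (N + 1)) in *.
  set (k1 := / ((N + 1) * (N + 2))). set (k2 := / (N * (N + 1))). set (k3 := / (N * (N - 1))).
  assert (Hk1 : 0 <= k1 <= 1)
    by (split; [apply Rlt_le, Rinv_0_lt_compat; nra | rewrite <- Rinv_1; apply Rinv_le_contravar; nra]).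
  assert (Hk2 : 0 <= k2 <= 1)
    by (split; [apply Rlt_le, Rinv_0_lt_compat; nra | rewrite <- Rinv_1; apply Rinv_le_contravar; nra]).
  assert (Hk3 : 0 <= k3 <= 1)
    by (split; [apply Rlt_le, Rinv_0_lt_compat; nra | rewrite <- Rinv_1; apply Rinv_le_contravar; nra]).
  assert (Hpow : forall k, 0 <= rho ^ k <= 1)
    by (intros k; split; [apply pow_le; lra | rewrite <- (pow1 k); apply pow_incr; lra]).
  set (p := rho ^ (n - 1)).
  pose proof (gt_mul_unit (- gamma n e) eta (k1 * (p * rho ^ 3)) ltac:(lra)
    (unit_mul _ _ Hk1 (unit_mul _ _ (Hpow _) (Hpow _)))).
  pose proof (gt_mul_unit (- (u - gamma n e)) (2 * eta) (k2 * (p * rho ^ 2)) ltac:(lra)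
    (unit_mul _ _ Hk2 (unit_mul _ _ (Hpow _) (Hpow _)))).
  pose proof (gt_mul_unit u eta (k3 * (p * rho ^ 1)) Hu
    (unit_mul _ _ Hk3 (unit_mul _ _ (Hpow _) (Hpow _)))).
  pose proof (gt_mul_unit (- beta n e) eta rho ltac:(lra) Hrho).
  assert (Hshift : forall j, rho ^ (n - 1 + j) = p * rho ^ j) by (intros; apply pow_add).
  replace (Q n e rho) with (p * (1 - rho) ^ 2 + - gamma n e * (k1 * (p * rho ^ 3))
    + - (u - gamma n e) * (k2 * (p * rho ^ 2)) + u * (k3 * (p * rho ^ 1))
    - alpha n e + - beta n e * rho).
  - lra.
  - unfold Q.
    replace (rho ^ (n + 2)) with (p * rho ^ 3) by (rewrite <- Hshift; f_equal; lia).
    replace (rho ^ (n + 1)) with (p * rho ^ 2) by (rewrite <- Hshift; f_equal; lia).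
    replace (rho ^ n) with (p * rho ^ 1) by (rewrite <- Hshift; f_equal; lia).
    unfold u, k1, k2, k3. fold p. field. repeat split; lra.
Qed.

Lemma Q_pos_near_eps (e eta rho : R) : Dp n e <> 0 -> delta_den e <> 0 ->
  near_limit e eta -> eta <= / 8 -> 0 < e < rho -> 4 * N * N * rho <= 1 -> 0 < Q n e rho.
Proof.
  intros HD Hden Hlim Heta Herho Hrho. pose proof N_ge3.
  apply (convex_pos_after_root (Q n e) (Q' e) (Q'' e) e rho).
  - lra.
  - intros x _. apply derivable_pt_lim_Q.
  - intros x _. apply derivable_pt_lim_Q'.
  - intros x Hx. apply (Q''_pos e eta); auto.
    + nra.
    + left. nra.
  - apply Q_at_eps, HD.
  - rewrite Q'_at_eps by assumption.
    apply Rmult_le_pos; [apply pow_le |]; nra.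
Qed.

Lemma Q_pos_near_one (e eta rho : R) : near_limit e eta -> eta <= / 8 ->
  0 < rho < 1 -> 4 * N * (1 - rho) <= 1 -> 0 < Q n e rho.
Proof.
  intros Hlim Heta Hrho Hrho1. pose proof N_ge3.
  apply (convex_pos_before_root (Q n e) (Q' e) (Q'' e) rho 1).
  - lra.
  - intros x _. apply derivable_pt_lim_Q.
  - intros x _. apply derivable_pt_lim_Q'.
  - intros x Hx. apply (Q''_pos e eta); auto.
    + lra.
    + right. nra.
  - apply Q_at_one.
  - rewrite Q'_at_one. lra.
Qed.

Lemma Q_pos_middle (e eta rho : R) : near_limit e eta -> 0 < rho < 1 ->
  1 < 4 * N * N * rho -> 1 < 4 * N * (1 - rho) ->
  6 * eta <= (/ (4 * N * N)) ^ (n - 1) * (/ (4 * N)) ^ 2 -> 0 < Q n e rho.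
Proof.
  intros Hlim Hrho Hrho0 Hrho1 Heta. pose proof N_ge3.
  pose proof (Q_gt_limit e eta rho Hlim ltac:(lra)).
  assert (Hlow : / (4 * N * N) <= rho).
  { apply (Rmult_le_reg_l (4 * N * N)); [nra |]. rewrite Rinv_r; nra. }
  assert (Hhigh : / (4 * N) <= 1 - rho).
  { apply (Rmult_le_reg_l (4 * N)); [nra |]. rewrite Rinv_r; nra. }
  assert ((/ (4 * N * N)) ^ (n - 1) * (/ (4 * N)) ^ 2 <= rho ^ (n - 1) * (1 - rho) ^ 2).
  { assert (0 < / (4 * N * N)) by (apply Rinv_0_lt_compat; nra).
    assert (0 < / (4 * N)) by (apply Rinv_0_lt_compat; nra).
    apply Rmult_le_compat; try (apply pow_le; lra); apply pow_incr; lra. }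
  lra.
Qed.

End Degree.

Theorem lemma4p9 (n : nat) (Hn : (3 <= n)%nat) :
  exists e0 : R, 0 < e0 /\
    forall e : R, 0 < e < 1 -> e < e0 ->
      forall rho : R, e < rho < 1 -> 0 < Q n e rho.
Proof.
  pose proof (N_ge3 n Hn).
  set (m := (/ (4 * INR n * INR n)) ^ (n - 1) * (/ (4 * INR n)) ^ 2).
  assert (Hm : 0 < m) by (apply Rmult_lt_0_compat; apply pow_lt, Rinv_0_lt_compat; nra).
  set (eta := Rmin (/ 8) (m / 6)).
  assert (Heta : 0 < eta) by (apply Rmin_pos; lra).
  assert (Heta8 : eta <= / 8) by apply Rmin_l.
  assert (Hetam : 6 * eta <= m) by (unfold eta; pose proof (Rmin_r (/ 8) (m / 6)); lra).
  destruct (eventually_near_limit n Hn eta Heta) as [d [Hd Hnear]].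
  exists d. split; [exact Hd |].
  intros e He Hed rho Hrho.
  destruct (Hnear e ltac:(lra)) as (HD & Hden & Hlim).
  destruct (Rle_lt_dec (4 * INR n * INR n * rho) 1) as [Hnear_e | Hfar_e].
  - exact (Q_pos_near_eps n Hn e eta rho HD Hden Hlim Heta8 ltac:(lra) Hnear_e).
  - destruct (Rle_lt_dec (4 * INR n * (1 - rho)) 1) as [Hnear_1 | Hfar_1].
    + exact (Q_pos_near_one n Hn e eta rho Hlim Heta8 ltac:(lra) Hnear_1).
    + exact (Q_pos_middle n Hn e eta rho Hlim ltac:(lra) Hfar_e Hfar_1 Hetam).
Qed.
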